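(* Let $\mathcal{V}$ be a finite set of nodes, $\mathcal{F}$ a finite set of flows, each flow $f$ with rate $\lambda_f>0$ and path node set $\mathcal{V}_f\subseteq\mathcal{V}$, and each node $v$ with capacity $c_v>0$. For $\mathcal{U}\subseteq\mathcal{V}$ let $R_3(\mathcal{U})$ be the optimal value of $$\max \sum_{f\in\mathcal{F}}\sum_{v\in\mathcal{V}_f\cap\mathcal{U}}\lambda_f^v$$ over nonnegative $(\lambda_f^v)_{f\in\mathcal{F},v\in\mathcal{V}}$ subject to $\sum_{f\in\mathcal{F}}\lambda_f^v\le c_v$ for all $v\in\mathcal{U}$, $\lambda_f^v=0$ for all $f$ and all $v\notin\mathcal{U}$, and $\sum_{v\in\mathcal{U}}\lambda_f^v\le\lambda_f$ for all $f\in\mathcal{F}$. Then the set function $R_3:2^{\mathcal{V}}\to\mathbb{R}$ is monotonically nondecreasing and submodular.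
   Context: A set function $H:2^{\mathcal{V}}\to\mathbb{R}$ is submodular if $H(\mathcal{V}_1\cup\{v\})-H(\mathcal{V}_1)\ge H(\mathcal{V}_2\cup\{v\})-H(\mathcal{V}_2)$ for all $\mathcal{V}_1\subseteq\mathcal{V}_2\subseteq\mathcal{V}$ and $v\in\mathcal{V}\setminus\mathcal{V}_2$. *)

From HB Require Import structures.
From mathcomp Require Import all_boot all_order all_algebra.
From mathcomp Require Import boolp classical_sets reals.
Set Implicit Arguments. Unset Strict Implicit. Unset Printing Implicit Defensive.
Import Order.TTheory GRing.Theory Num.Theory.
Local Open Scope ring_scope.
Local Open Scope classical_set_scope.

Section LP.
Variables (R : realType) (V F : finType).
Variables (rate : F -> R) (path : F -> {set V}) (cap : V -> R).

Definition feasible3 (U : {set V}) (lam : F -> V -> R) : Prop :=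
  [/\ (forall f v, 0 <= lam f v),
      (forall v, v \in U -> \sum_(f : F) lam f v <= cap v),
      (forall f v, v \notin U -> lam f v = 0) &
      (forall f, \sum_(v in U) lam f v <= rate f)].

Definition obj3 (U : {set V}) (lam : F -> V -> R) : R :=
  \sum_(f : F) \sum_(v in path f :&: U) lam f v.

Definition R3 (U : {set V}) : R :=
  sup [set x | exists lam, feasible3 U lam /\ x = obj3 U lam].
End LP.

Definition monotone_setfun (R : realType) (V : finType) (H : {set V} -> R) : Prop :=
  forall U1 U2 : {set V}, U1 \subset U2 -> H U1 <= H U2.

Definition submodular (R : realType) (V : finType) (H : {set V} -> R) : Prop :=
  forall (U1 U2 : {set V}) (v : V), U1 \subset U2 -> v \notin U2 ->
    H (v |: U1) - H U1 >= H (v |: U2) - H U2.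

(* R3 U is the value of a maximum flow from the flows to the nodes of U, with
   supplies [rate] and capacities [cap].  A supply-demand form of Hall's theorem,
   proved by induction on the size of the bipartite network, shows that it equals
   the minimum over S of the cut value
     sum_(f not in S) rate f + sum_(v in U visited by a flow of S) cap v.
   For fixed S the cut value is monotone in U, and pointwise
     cut (X :|: Y) (S :&: T) + cut (X :&: Y) (S :|: T) <= cut X S + cut Y T;
   minimising over S and T gives R3 (X :|: Y) + R3 (X :&: Y) <= R3 X + R3 Y, which
   for X = v |: U1 and Y = U2 is the submodularity inequality. *)

From HB Require Import structures.
From mathcomp Require Import all_boot all_order all_algebra.
From mathcomp Require Import boolp classical_sets reals.
(* Re-imported so that the finset names shadowed by classical_sets win again. *)
From mathcomp Require Import fintype finset.
From mathcomp Require Import lra zify.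
Set Implicit Arguments. Unset Strict Implicit. Unset Printing Implicit Defensive.
Import Order.TTheory GRing.Theory Num.Theory.
Local Open Scope ring_scope.

Lemma bigmin_attained d (T : orderType d) (I : finType) (P : pred I) (F : I -> T) x :
  let m := \big[Order.min/x]_(i | P i) F i in m = x \/ exists2 i, P i & m = F i.
Proof.
apply: (big_rec (fun m => m = x \/ exists2 i, P i & m = F i)); first by left.
by move=> i m Pi IHm; rewrite minEle; case: ifP => _; [right; exists i|].
Qed.

Lemma sum_option (R : nmodType) (T : finType) (h : option T -> R) :
  \sum_x h x = h None + \sum_y h (Some y).
Proof.
rewrite (bigD1 None) //= (reindex_omap Some id) => [|[y|] //].
by congr (_ + _); apply: eq_bigl => y; rewrite eqxx.
Qed.

Lemma sum_setU_disjoint (R : nmodType) (I : finType) (A B : {set I}) (g : I -> R) :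
  [disjoint A & B] -> \sum_(i in A :|: B) g i = \sum_(i in A) g i + \sum_(i in B) g i.
Proof. by move=> dAB; rewrite -bigU //; apply: eq_bigl => i; rewrite !inE. Qed.

Lemma sum_setC (R : nmodType) (I : finType) (A : {set I}) (g : I -> R) :
  \sum_i g i = \sum_(i in A) g i + \sum_(i in ~: A) g i.
Proof. by rewrite (bigID (mem A)) /=; congr (_ + _); apply: eq_bigl => i; rewrite inE. Qed.

Lemma sum_setUI (R : nmodType) (I : finType) (A B : {set I}) (g : I -> R) :
  \sum_(i in A :|: B) g i + \sum_(i in A :&: B) g i = \sum_(i in A) g i + \sum_(i in B) g i.
Proof.
rewrite (big_setID (A := A :|: B) A) setUK setDUl setDv set0U (big_setID (A := B) A) setIC.
by rewrite -addrA [X in _ + X]addrC.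
Qed.

Section RealSums.
Variable R : realFieldType.

Lemma ler_sum_subset (I : finType) (P Q : pred I) (g : I -> R) :
  (forall i, P i -> Q i) -> (forall i, Q i -> 0 <= g i) ->
  \sum_(i | P i) g i <= \sum_(i | Q i) g i.
Proof.
move=> PQ g0; rewrite [leLHS]big_mkcond [leRHS]big_mkcond /=.
by apply: ler_sum => i _; case: ifP => [/PQ -> //|_]; case: ifP => // /g0.
Qed.

Lemma sum_indicator (I : finType) (P : pred I) a (t : R) :
  \sum_(i | P i) (i == a)%:R * t = (P a)%:R * t.
Proof.
case Pa: (P a).
  by rewrite (bigD1 a) //= eqxx big1 ?addr0 // => i /andP[_ /negbTE ->]; rewrite mul0r.
by rewrite mul0r big1 // => i Pi; case: eqP Pi Pa => [-> -> //|_ _ _]; rewrite mul0r.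
Qed.

Lemma sum_setD1_eq0 (I : finType) (A : {set I}) a (g : I -> R) :
  g a = 0 -> \sum_(i in A :\ a) g i = \sum_(i in A) g i.
Proof.
move=> ga; rewrite big_mkcond [RHS]big_mkcond; apply: eq_bigr => i _.
by rewrite !inE; case: eqP => [->|]; rewrite ?ga ?if_same.
Qed.

End RealSums.

Section Transport.
Variables (R : realFieldType) (F V : finType) (adj : F -> V -> bool).
Implicit Types (S T Fs : {set F}) (Ws : {set V}) (r : F -> R) (c : V -> R) (l : F -> V -> R).

Definition nbhd S : {set V} := [set v | [exists f in S, adj f v]].

Lemma nbhdP S v : reflect (exists2 f, f \in S & adj f v) (v \in nbhd S).
Proof.
rewrite inE; apply: (iffP existsP) => [[f /andP[]]|[f fS a]]; first by exists f.
by exists f; rewrite fS.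
Qed.

Lemma nbhdS S T : S \subset T -> nbhd S \subset nbhd T.
Proof.
move=> /subsetP ST; apply/subsetP => v /nbhdP[f /ST fT a].
by apply/nbhdP; exists f.
Qed.

Lemma nbhdU S T : nbhd (S :|: T) = nbhd S :|: nbhd T.
Proof.
apply/setP => v; apply/nbhdP/setUP => [[f /setUP[] fS a]|[] /nbhdP[f fS a]].
- by left; apply/nbhdP; exists f.
- by right; apply/nbhdP; exists f.
- by exists f; rewrite // inE fS.
- by exists f; rewrite // inE fS orbT.
Qed.

Definition is_transport Fs Ws r c l :=
  [/\ forall f v, 0 <= l f v,
      forall f v, l f v != 0 -> [&& f \in Fs, v \in Ws & adj f v],
      forall f, f \in Fs -> \sum_v l f v = r f &
      forall v, \sum_f l f v <= c v].

Definition hall Fs Ws r c :=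
  forall S, S \subset Fs -> \sum_(f in S) r f <= \sum_(v in nbhd S :&: Ws) c v.

Lemma transport_eq0_source Fs Ws r c l f v :
  is_transport Fs Ws r c l -> f \notin Fs -> l f v = 0.
Proof. by case=> _ supp _ _ fF; apply/eqP; apply: contraNT fF => /supp /and3P[]. Qed.

Lemma transport_eq0_sink Fs Ws r c l f v :
  is_transport Fs Ws r c l -> v \notin Ws -> l f v = 0.
Proof. by case=> _ supp _ _ vW; apply/eqP; apply: contraNT vW => /supp /and3P[]. Qed.

Lemma transport_set0 Ws r c :
  (forall v, 0 <= c v) -> is_transport set0 Ws r c (fun _ _ => 0).
Proof. by move=> c0; split=> [//|f v|f|v]; rewrite ?eqxx ?inE ?big1. Qed.

Lemma transport_widen Fs Fs' Ws Ws' r c l :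
  Fs' \subset Fs -> Ws' \subset Ws -> {in Fs :\: Fs', forall f, r f = 0} ->
  is_transport Fs' Ws' r c l -> is_transport Fs Ws r c l.
Proof.
move=> /subsetP sF /subsetP sW r0 tl; have [l0 supp row col] := tl; split=> //.
  by move=> f v /supp /and3P[/sF -> /sW -> ->].
move=> f fF; have [fF'|fF'] := boolP (f \in Fs'); first exact: row.
by rewrite r0 ?inE ?fF ?fF' // big1 // => v _; apply: transport_eq0_source tl fF'.
Qed.

Lemma transport_merge Fs1 Fs2 Ws1 Ws2 r c l1 l2 :
  [disjoint Fs1 & Fs2] -> [disjoint Ws1 & Ws2] ->
  is_transport Fs1 Ws1 r c l1 -> is_transport Fs2 Ws2 r c l2 ->
  is_transport (Fs1 :|: Fs2) (Ws1 :|: Ws2) r c (fun f v => l1 f v + l2 f v).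
Proof.
move=> dF dW t1 t2; have [l1_0 supp1 row1 col1] := t1; have [l2_0 supp2 row2 col2] := t2.
split=> [f v|f v|f|v]; first exact: addr_ge0.
- have [/eqP->|/supp1 /and3P[fF vW ->]] := boolP (l1 f v == 0).
    by rewrite add0r => /supp2 /and3P[fF vW ->]; rewrite !inE fF vW !orbT.
  by rewrite !inE fF vW.
- rewrite big_split /= => /setUP[] fF.
    rewrite row1 // big1 ?addr0 // => v _.
    by apply: transport_eq0_source t2 _; rewrite (disjointFr dF fF).
  rewrite row2 // big1 ?add0r // => v _.
  by apply: transport_eq0_source t1 _; rewrite (disjointFl dF fF).
- rewrite big_split /=; have [vW|vW] := boolP (v \in Ws1).
    rewrite [X in _ + X]big1 ?addr0 // => f _.
    by apply: transport_eq0_sink t2 _; rewrite (disjointFr dW vW).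
  by rewrite big1 ?add0r // => f _; apply: transport_eq0_sink t1 vW.
Qed.

Lemma hallS Fs Fs' Ws r c : Fs' \subset Fs -> hall Fs Ws r c -> hall Fs' Ws r c.
Proof. by move=> sF H S SF'; apply: H; apply: subset_trans sF. Qed.

Lemma hall_drop_sink Fs Ws r c v0 : c v0 = 0 -> hall Fs Ws r c -> hall Fs (Ws :\ v0) r c.
Proof. by move=> c0 H S SF; rewrite setIDA sum_setD1_eq0 //; apply: H. Qed.

Lemma hall_restrict Fs Ws r c S :
  S \subset Fs -> hall Fs Ws r c -> hall S (nbhd S :&: Ws) r c.
Proof.
move=> SF H T TS; rewrite setIA (setIidPl (nbhdS TS)).
by apply: H; apply: subset_trans SF.
Qed.

(* Hall's condition for [T :|: S] minus the tight equality for [S]. *)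
Lemma hall_contract Fs Ws r c S :
  S \subset Fs -> \sum_(f in S) r f = \sum_(v in nbhd S :&: Ws) c v ->
  hall Fs Ws r c -> hall (Fs :\: S) (Ws :\: nbhd S) r c.
Proof.
move=> SF tight H T /subsetDP[TF dTS].
have := H (T :|: S); rewrite subUset TF SF => /(_ isT).
rewrite sum_setU_disjoint // nbhdU.
have -> : (nbhd T :|: nbhd S) :&: Ws = nbhd T :&: (Ws :\: nbhd S) :|: nbhd S :&: Ws.
  apply/setP => v; rewrite !(in_setU, in_setI, in_setD).
  by case: (v \in nbhd T); case: (v \in nbhd S); case: (v \in Ws).
rewrite sum_setU_disjoint -?tight; first lra.
rewrite -setI_eq0; apply/eqP/setP => v; rewrite !(in_setI, in_setD, in_set0).
by case: (v \in nbhd S); rewrite ?andbF.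
Qed.

Lemma hall_push Fs Ws r c f0 v0 t :
  f0 \in Fs -> v0 \in Ws -> adj f0 v0 ->
  (forall S, S \subset Fs :\ f0 -> v0 \in nbhd S ->
     t + \sum_(f in S) r f <= \sum_(v in nbhd S :&: Ws) c v) ->
  hall Fs Ws r c ->
  hall Fs Ws (fun f => r f - (f == f0)%:R * t) (fun v => c v - (v == v0)%:R * t).
Proof.
move=> f0F v0W a0 slack H S SF; rewrite !sumrB !sum_indicator.
have [f0S|f0S] := boolP (f0 \in S).
  have v0S : v0 \in nbhd S :&: Ws by rewrite inE v0W andbT; apply/nbhdP; exists f0.
  by rewrite v0S; have := H S SF; lra.
rewrite mul0r subr0; have [v0S|_] := boolP (v0 \in nbhd S :&: Ws); last first.
  by rewrite mul0r subr0; apply: H.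
move: v0S; rewrite inE => /andP[v0S _].
by have := slack S; rewrite subsetD1 SF f0S v0S mul1r => /(_ isT isT); lra.
Qed.

Lemma transport_push Fs Ws r c l f0 v0 t :
  f0 \in Fs -> v0 \in Ws -> adj f0 v0 -> 0 <= t ->
  is_transport Fs Ws (fun f => r f - (f == f0)%:R * t) (fun v => c v - (v == v0)%:R * t) l ->
  is_transport Fs Ws r c (fun f v => l f v + (f == f0)%:R * ((v == v0)%:R * t)).
Proof.
move=> f0F v0W a0 t0 [l0 supp row col]; split=> [f v|f v|f fF|v].
- by rewrite addr_ge0 ?mulr_ge0.
- have [/eqP->|/supp //] := boolP (l f v == 0); rewrite add0r.
  case: (f =P f0) => [->|_]; last by rewrite mul0r eqxx.
  by case: (v =P v0) => [->|_]; rewrite ?mul0r ?mulr0 ?eqxx // f0F v0W a0.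
- by rewrite big_split /= -mulr_sumr sum_indicator row //=; lra.
- rewrite big_split /=; under [X in _ + X]eq_bigr do rewrite mulrCA.
  by rewrite -mulr_sumr sum_indicator /=; have := col v; lra.
Qed.

End Transport.

Section HallTheorem.
Variables (R : realFieldType) (F V : finType) (adj : F -> V -> bool).
Implicit Types (S Fs : {set F}) (Ws : {set V}) (r : F -> R) (c : V -> R).

Definition hall_transport_upto n := forall Fs Ws r c,
  (#|Fs| + #|Ws| <= n)%N -> (forall f, 0 <= r f) -> (forall v, 0 <= c v) ->
  hall adj Fs Ws r c -> exists l, is_transport adj Fs Ws r c l.

Section InductionStep.
Variable n : nat.
Hypothesis IH : hall_transport_upto n.

Lemma transport_drop_source Fs Ws r c f0 :
  (#|Fs| + #|Ws| <= n.+1)%N -> (forall f, 0 <= r f) -> (forall v, 0 <= c v) ->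
  hall adj Fs Ws r c -> f0 \in Fs -> r f0 = 0 -> exists l, is_transport adj Fs Ws r c l.
Proof.
move=> size r0 c0 H f0F rf0.
have [|l tl] := IH _ r0 c0 (hallS (subD1set Fs f0) H).
  by move: size; rewrite (cardsD1 f0 Fs) f0F; lia.
exists l; apply: transport_widen tl => //; first exact: subD1set.
by move=> f; rewrite setDDr setDv set0U inE => /andP[_ /set1P ->].
Qed.

Lemma transport_drop_sink Fs Ws r c v0 :
  (#|Fs| + #|Ws| <= n.+1)%N -> (forall f, 0 <= r f) -> (forall v, 0 <= c v) ->
  hall adj Fs Ws r c -> v0 \in Ws -> c v0 = 0 -> exists l, is_transport adj Fs Ws r c l.
Proof.
move=> size r0 c0 H v0W cv0.
have [|l tl] := IH _ r0 c0 (hall_drop_sink cv0 H).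
  by move: size; rewrite (cardsD1 v0 Ws) v0W; lia.
exists l; apply: transport_widen tl => //; first exact: subD1set.
by move=> f; rewrite setDv inE.
Qed.

Lemma transport_split Fs Ws r c S :
  (#|Fs| + #|Ws| <= n.+1)%N -> (forall f, 0 <= r f) -> (forall v, 0 <= c v) ->
  hall adj Fs Ws r c -> S \subset Fs -> S != set0 -> S != Fs ->
  \sum_(f in S) r f = \sum_(v in nbhd adj S :&: Ws) c v ->
  exists l, is_transport adj Fs Ws r c l.
Proof.
move=> size r0 c0 H SF S0 SFs tight.
have ltSF : (#|S| < #|Fs|)%N by apply: proper_card; rewrite properEneq SFs.
have S_gt0 : (0 < #|S|)%N by rewrite card_gt0.
have W1 : (#|nbhd adj S :&: Ws| <= #|Ws|)%N by apply/subset_leq_card/subsetIr.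
have W2 : (#|Ws :\: nbhd adj S| <= #|Ws|)%N by apply/subset_leq_card/subsetDl.
have F2 : #|Fs :\: S| = (#|Fs| - #|S|)%N by rewrite cardsD (setIidPr SF).
have [|l1 t1] := IH _ r0 c0 (hall_restrict SF H); first lia.
have [|l2 t2] := IH _ r0 c0 (hall_contract SF tight H); first lia.
exists (fun f v => l1 f v + l2 f v).
rewrite -[Fs](setID Fs S) (setIidPr SF) -[Ws](setID Ws (nbhd adj S)) [Ws :&: _]setIC.
apply: transport_merge t1 t2.
  by rewrite disjoint_sym disjoints_subset setDE subsetIr.
rewrite disjoint_sym disjoints_subset setDE setCI setIC.
exact: subset_trans (subsetIl _ _) (subsetUl _ _).
Qed.

(* Push along [f0 -> v0] the largest amount [t] that keeps Hall's condition: then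
   [f0] is exhausted, [v0] is full, or some set of sources avoiding [f0] becomes
   tight, and each case reduces to smaller networks. *)
Lemma transport_edge Fs Ws r c f0 v0 :
  (#|Fs| + #|Ws| <= n.+1)%N -> (forall f, 0 <= r f) -> (forall v, 0 <= c v) ->
  hall adj Fs Ws r c -> f0 \in Fs -> v0 \in Ws -> adj f0 v0 ->
  exists l, is_transport adj Fs Ws r c l.
Proof.
move=> size r0 c0 H f0F v0W a0.
pose P S := (S \subset Fs :\ f0) && (v0 \in nbhd adj S).
pose slack S := \sum_(v in nbhd adj S :&: Ws) c v - \sum_(f in S) r f.
pose t := \big[Order.min/Order.min (r f0) (c v0)]_(S | P S) slack S.
have t_slack S : P S -> t <= slack S by exact: bigmin_le_cond.
have /andP[t_r t_c] : (t <= r f0) && (t <= c v0) by rewrite -le_min bigmin_le_id.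
have t_ge0 : 0 <= t.
  apply/bigmin_geP; split=> [|S /andP[SF _]]; first by rewrite le_min r0 c0.
  by rewrite subr_ge0; apply: H; apply: subset_trans SF (subD1set _ _).
pose r' f := r f - (f == f0)%:R * t; pose c' v := c v - (v == v0)%:R * t.
have r'0 f : 0 <= r' f.
  by rewrite /r'; case: eqP => [->|_]; rewrite ?mul1r ?subr_ge0 ?mul0r ?subr0.
have c'0 v : 0 <= c' v.
  by rewrite /c'; case: eqP => [->|_]; rewrite ?mul1r ?subr_ge0 ?mul0r ?subr0.
have H' : hall adj Fs Ws r' c'.
  apply: hall_push => // S SF v0S.
  by have := t_slack S; rewrite /P SF v0S /slack => /(_ isT); lra.
suff [l tl] : exists l, is_transport adj Fs Ws r' c' l.
  by eexists; apply: transport_push tl.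
have [tm|[S /andP[SF v0S] tS]] := bigmin_attained P slack (Order.min (r f0) (c v0)).
  move: tm; rewrite -/t minEle; case: ifP => _ tm.
    by apply: (transport_drop_source (f0 := f0)); rewrite // /r' eqxx tm mul1r subrr.
  by apply: (transport_drop_sink (v0 := v0)); rewrite // /c' eqxx tm mul1r subrr.
apply: (transport_split (S := S)) => //.
- exact: subset_trans SF (subD1set _ _).
- by apply: contraTneq v0S => ->; apply/negP => /nbhdP[f]; rewrite inE.
- by apply: contraTneq SF => ->; rewrite subsetD1 f0F andbF.
- move: SF; rewrite subsetD1 => /andP[_ f0S].
  rewrite !sumrB !sum_indicator (negbTE f0S) inE v0S v0W mul0r mul1r subr0.
  by move: tS; rewrite -/t /slack; lra.
Qed.

End InductionStep.

Lemma hall_transport_all n : hall_transport_upto n.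
Proof.
elim: n => [|n IH] Fs Ws r c size r0 c0 H.
  exists (fun _ _ => 0); have -> : Fs = set0 by apply/eqP; rewrite -cards_eq0; lia.
  exact: transport_set0.
have [->|[f0 f0F]] := set_0Vmem Fs; first by exists (fun _ _ => 0); apply: transport_set0.
have [/existsP[v0 /andP[v0W a0]]|isolated] := boolP [exists v in Ws, adj f0 v].
  exact: (transport_edge IH (f0 := f0) (v0 := v0)).
apply: (transport_drop_source IH (f0 := f0)) => //.
apply/eqP; rewrite eq_le r0 andbT.
have := H [set f0]; rewrite sub1set f0F big_set1 big1 => [/(_ isT) //|v].
rewrite inE => /andP[/nbhdP[f /set1P -> a] vW].
by case/negP: isolated; apply/existsP; exists v; rewrite vW.
Qed.

Theorem hall_transport Fs Ws r c :
  (forall f, 0 <= r f) -> (forall v, 0 <= c v) -> hall adj Fs Ws r c ->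
  exists l, is_transport adj Fs Ws r c l.
Proof. exact: hall_transport_all (leqnn _). Qed.

End HallTheorem.

Section MinCut.
Variables (R : realType) (V F : finType).
Variables (rate : F -> R) (path : F -> {set V}) (cap : V -> R).
Implicit Types (U X Y : {set V}) (S T : {set F}) (lam : F -> V -> R).

Definition cut_value U S :=
  \sum_(f in ~: S) rate f + \sum_(v in (\bigcup_(f in S) path f) :&: U) cap v.

Lemma obj3_le_cut U S lam : feasible3 rate cap U lam -> obj3 path U lam <= cut_value U S.
Proof.
case=> lam0 lam_cap _ lam_rate; rewrite /obj3 /cut_value (sum_setC S) addrC.
apply: lerD.
  apply: ler_sum => f _; apply: le_trans (lam_rate f).
  by apply: ler_sum_subset => // v /setIP[].
apply: (@le_trans _ _ (\sum_(f in S) \sum_(v in (\bigcup_(g in S) path g) :&: U) lam f v)).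
  apply: ler_sum => f fS; apply: ler_sum_subset => // v /setIP[vf vU].
  by rewrite inE vU andbT; apply/bigcupP; exists f.
rewrite exchange_big /=; apply: ler_sum => v /setIP[_ vU].
by apply: le_trans (lam_cap v vU); apply: ler_sum_subset.
Qed.

Section AugmentedNetwork.
Variables (U : {set V}) (K : R).
Hypothesis cap_ge0 : forall v, 0 <= cap v.

(* The network of [R3 U] with an extra sink [None] adjacent to every flow, of
   capacity [K]; it absorbs the part of the rates that is not routed into [U]. *)
Definition aug_adj f (x : option V) := if x is Some v then v \in path f :&: U else true.
Definition aug_cap (x : option V) := if x is Some v then cap v else K.

Lemma sum_aug_nbhd S : S != set0 ->
  \sum_(x in nbhd aug_adj S :&: setT) aug_cap x =
  K + \sum_(v in (\bigcup_(f in S) path f) :&: U) cap v.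
Proof.
case/set0Pn=> f0 f0S; rewrite big_mkcond sum_option [in RHS]big_mkcond /=.
have -> : None \in nbhd aug_adj S :&: setT by rewrite setIT; apply/nbhdP; exists f0.
congr (_ + _); apply: eq_bigr => v _; congr (if _ then _ else _).
rewrite setIT; apply/nbhdP/setIP => [[f fS /setIP[vf vU]]|[/bigcupP[f fS vf] vU]].
  by split=> //; apply/bigcupP; exists f.
by exists f; rewrite //= inE vf.
Qed.

Lemma hall_aug : 0 <= K -> (forall S, \sum_f rate f <= K + cut_value U S) ->
  hall aug_adj setT setT rate aug_cap.
Proof.
move=> K0 K_cut S _; have [->|S0] := eqVneq S set0.
  by rewrite big_set0 sumr_ge0 // => -[v|] _; [exact: cap_ge0|].
by rewrite sum_aug_nbhd //; have := K_cut S; rewrite /cut_value (sum_setC S); lra.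
Qed.

Lemma feasible3_aug l : is_transport aug_adj setT setT rate aug_cap l ->
  feasible3 rate cap U (fun f v => l f (Some v)).
Proof.
case=> l0 supp row col; split=> [f v|v _|f v vU|f]; [exact: l0|exact: col (Some v)| |].
  by apply/eqP; apply: contraNT vU => /supp /and3P[_ _ /setIP[]].
rewrite -(row f (in_setT f)) sum_option -[X in X <= _]add0r lerD ?l0 //.
exact: ler_sum_subset.
Qed.

Lemma obj3_aug l : is_transport aug_adj setT setT rate aug_cap l ->
  \sum_f rate f - K <= obj3 path U (fun f v => l f (Some v)).
Proof.
case=> _ supp row col.
have row_path f : \sum_(v in path f :&: U) l f (Some v) = rate f - l f None.
  rewrite -(row f (in_setT f)) sum_option addrAC subrr add0r big_mkcond.
  apply: eq_bigr => v _; case: ifP => // /negbT vfU.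
  by apply/esym/eqP; apply: contraNT vfU => /supp /and3P[].
by rewrite /obj3 (eq_bigr _ (fun f _ => row_path f)) sumrB; have /= := col None; lra.
Qed.

End AugmentedNetwork.

Section Duality.
Hypotheses (rate_ge0 : forall f, 0 <= rate f) (cap_ge0 : forall v, 0 <= cap v).

(* With [K] the total rate minus a minimum cut, Hall's condition for the
   augmented network is exactly the minimality of that cut. *)
Lemma exists_feasible3_cut U :
  exists S lam, feasible3 rate cap U lam /\ cut_value U S <= obj3 path U lam.
Proof.
pose S0 := [arg min_(S < set0) cut_value U S]%O.
have S0min S : cut_value U S0 <= cut_value U S.
  by rewrite /S0; case: arg_minP => // S1 _; apply.
pose K := \sum_f rate f - cut_value U S0.
have K0 : 0 <= K.
  have := S0min set0; rewrite /K /cut_value (sum_setC set0) !big_set0 set0I big_set0.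
  by rewrite add0r addr0 subr_ge0.
have aug_cap_ge0 x : 0 <= aug_cap K x by case: x => /=.
have [|l tl] := hall_transport rate_ge0 aug_cap_ge0 (hall_aug (U := U) cap_ge0 K0 _).
  by move=> S; have := S0min S; rewrite /K; lra.
exists S0, (fun f v => l f (Some v)); split; first exact: feasible3_aug tl.
by have := obj3_aug tl; rewrite /K; lra.
Qed.

Lemma R3_le_cut U S : R3 rate path cap U <= cut_value U S.
Proof.
have [_ [lam [fl _]]] := exists_feasible3_cut U.
apply: ge_sup; first by exists (obj3 path U lam), lam.
by move=> _ [lam' [fl' ->]]; apply: obj3_le_cut.
Qed.

Lemma R3_eq_cut U : exists S, R3 rate path cap U = cut_value U S.
Proof.
have [S [lam [fl cut_le]]] := exists_feasible3_cut U.
exists S; apply/eqP; rewrite eq_le R3_le_cut (le_trans cut_le) //.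
apply: ub_le_sup; last by exists lam.
by exists (cut_value U S) => _ [lam' [fl' ->]]; apply: obj3_le_cut.
Qed.


Lemma le_cut_value U1 U2 S : U1 \subset U2 -> cut_value U1 S <= cut_value U2 S.
Proof.
move=> /subsetP sU; rewrite lerD2l; apply: ler_sum_subset => // v /setIP[vS vU].
by rewrite inE vS sU.
Qed.

Lemma cut_value_submod X Y S T :
  cut_value (X :|: Y) (S :&: T) + cut_value (X :&: Y) (S :|: T) <=
  cut_value X S + cut_value Y T.
Proof.
rewrite /cut_value addrACA [leRHS]addrACA setCI setCU sum_setUI lerD2l.
rewrite [X in X + _ <= _]big_mkcond [X in _ + X <= _]big_mkcond.
rewrite [X in _ <= X + _]big_mkcond [X in _ <= _ + X]big_mkcond -!big_split /=.
apply: ler_sum => v _.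
have sub : (v \in \bigcup_(f in S :&: T) path f) ==>
           (v \in \bigcup_(f in S) path f) && (v \in \bigcup_(f in T) path f).
  by apply/implyP => /bigcupP[f /setIP[fS fT] vf]; apply/andP; split; apply/bigcupP; exists f.
rewrite bigcup_setU !inE; move: (cap_ge0 v) sub.
case: (v \in \bigcup_(f in S :&: T) path f); case: (v \in \bigcup_(f in S) path f);
  case: (v \in \bigcup_(f in T) path f); case: (v \in X); case: (v \in Y) => //= c0 _; lra.
Qed.

Lemma R3_monotone : monotone_setfun (R3 rate path cap).
Proof.
move=> U1 U2 sU; have [S ->] := R3_eq_cut U2.
exact: le_trans (R3_le_cut U1 S) (le_cut_value S sU).
Qed.

Lemma R3_submod X Y :
  R3 rate path cap (X :|: Y) + R3 rate path cap (X :&: Y) <=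
  R3 rate path cap X + R3 rate path cap Y.
Proof.
have [S ->] := R3_eq_cut X; have [T ->] := R3_eq_cut Y.
apply: le_trans (cut_value_submod X Y S T).
by apply: lerD; apply: R3_le_cut.
Qed.

End Duality.

End MinCut.


Theorem lemma2 (R : realType) (V F : finType)
  (rate : F -> R) (path : F -> {set V}) (cap : V -> R)
  (rate_pos : forall f, 0 < rate f) (cap_pos : forall v, 0 < cap v) :
  monotone_setfun (R3 rate path cap) /\ submodular (R3 rate path cap).
Proof.
have rate_ge0 f : 0 <= rate f by exact: ltW.
have cap_ge0 v : 0 <= cap v by exact: ltW.
split=> [|U1 U2 v sU vU2]; first exact: R3_monotone.
have := R3_submod path rate_ge0 cap_ge0 (v |: U1) U2.
have -> : (v |: U1) :|: U2 = v |: U2 by rewrite -setUA (setUidPr sU).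
have -> : (v |: U1) :&: U2 = U1.
  by rewrite setIUl (setIidPl sU) disjoint_setI0 ?set0U // disjoints1.
lra.
Qed.
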